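(* Let $\mathbf{RN}$ be a regulatory network, $z$ a regular parameter and $\ell$ the associated wall-labeling. Let $\mathcal F_W$, $\mathcal F_{WD}$ and $\mathcal F_D$ be the wall graph, wall-domain graph and domain graph induced by $\ell$. Then the Morse graphs $\mathsf{MG}(\mathcal F_W)$, $\mathsf{MG}(\mathcal F_{WD})$ and $\mathsf{MG}(\mathcal F_D)$ are isomorphic.
   Context: Regulatory network: $\mathbf{RN}=(V,E)$, $V=\{1,\dots,N\}$. Edges $(i,j)$ are activations $i\to j$ or repressions $i\dashv j$, with at most one per ordered pair and (standing assumption) no $i\dashv i$. Set $\mathbf S(n)=\{i:(i,n)\in E\}$ and $\mathbf T(n)=\{j:(n,j)\in E\}$. Node $j$ has a logic $M_j$ (the polynomial from an AND/OR expression without negation using each variable of $\mathbf S(j)$ once, via AND $\mapsto$ product and OR $\mapsto$ sum). Parameter: $z=(l,u,\theta,\gamma)$, consisting of $l_{j,i},u_{j,i},\theta_{j,i}$ per edge $(i,j)$ and $\gamma_i$ per node. Switching nonlinearity: $\sigma_{j,i}(x)=l_{j,i}$ if ($i\to j$, $x_i<\theta_{j,i}$) or ($i\dashv j$, $x_i>\theta_{j,i}$). It equals $u_{j,i}$ if ($i\to j$, $x_i>\theta_{j,i}$) or ($i\dashv j$, $x_i<\theta_{j,i}$). $\Lambda_j(x)=M_j((\sigma_{j,i}(x))_{i\in\mathbf S(j)})$. Fundamental cells: with $\theta_{-\infty,i}=0$ and $\theta_{\infty,i}=\infty$, a cell is $\kappa=\prod_i(\theta_{a_i,i},\theta_{b_i,i})$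 with consecutive thresholds. $\Lambda(\kappa)$ is the constant value of $\Lambda$ on $\kappa$. Left faces (for $a_k\in V$) replace the $k$-th factor by $\{\theta_{a_k,k}\}$; right faces (for $b_k\in V$) use $\{\theta_{b_k,k}\}$. Each face has projection index $k$ and switching index $a_k$ resp. $b_k$. Regular parameter: - $0<l<u$, $\gamma>0$ and $\theta>0$; - distinct $\theta_{j,i}$ for fixed $i$; - $\Lambda_i(\kappa)\ne\gamma_i\theta_{j,i}$ for each face threshold $\theta_{j,i}$ of $\kappa$. A cell $\kappa$ is attracting if $\Gamma^{-1}\Lambda(\kappa)\in\kappa$, where $\Gamma=\mathrm{diag}(\gamma_i)$. Walls: a wall is a pair $(\tau,\kappa)$ with $\tau$ a face of $\kappa$. $\mathrm{sgn}(\tau,\kappa)=\pm1$ for left/right faces. $\ell(\tau,\kappa)=\mathrm{sgn}(\tau,\kappa)\,\mathrm{sgn}(-\gamma_i\theta_{j,i}+\Lambda_i(\kappa))$ ($i$ projection index, $j$ switching index). $\ell=1$ means entrance and $\ell=-1$ absorbing. Wall graph: its vertices are the attracting cells and all faces of all cells. There is an edge $\tau\to\tau'$ whenever some cell $\kappa$ has $(\tau,\kappa)$ entrance and $(\tau',\kappa)$ absorbing. For each attracting $\kappa$ there are edges $\kappa\to\kappa$ and $\tau\to\kappa$ for every wall $(\tau,\kappa)$. Domain graph: its vertices are all cells. There is an edge $\kappa\to\kappa$ if $\kappa$ is attracting, and an edge $\kappa\to\kappa'$ if some face $\tau$ has $(\tau,\kappa)$ absorbing and $(\tau,\kappa')$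 entrance. Wall-domain graph: its vertices are all cells and all faces. There is an edge $\kappa\to\tau$ if $(\tau,\kappa)$ is absorbing, an edge $\tau\to\kappa$ if $(\tau,\kappa)$ is entrance, and an edge $\kappa\to\kappa$ if $\kappa$ is attracting. Morse graph of a directed graph $\mathcal F$: - A recurrent component (Morse set) is a maximal vertex set $\mathcal C$ such that for all $u,v\in\mathcal C$ there is a non-empty path from $u$ to $v$ within $\mathcal C$. - Morse sets are partially ordered by $q\le p$ iff there is a path in $\mathcal F$ from an element of $\mathcal M(p)$ to an element of $\mathcal M(q)$. - $\mathsf{MG}(\mathcal F)$ is the Hasse diagram of this poset. *)

From HB Require Import structures.
From mathcomp Require Import all_boot all_order all_algebra.
Set Implicit Arguments. Unset Strict Implicit. Unset Printing Implicit Defensive.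
Import Order.TTheory GRing.Theory Num.Theory.
Local Open Scope ring_scope.

Inductive lexpr (N : nat) : Type :=
| LVar of 'I_N
| LAnd of lexpr N & lexpr N
| LOr of lexpr N & lexpr N.

Fixpoint lvars N (e : lexpr N) : seq 'I_N :=
  match e with
  | LVar i => [:: i]
  | LAnd a b => lvars a ++ lvars b
  | LOr a b => lvars a ++ lvars b
  end.

(* the polynomial M_j: AND |-> product, OR |-> sum *)
Fixpoint leval (R : realFieldType) N (s : 'I_N -> R) (e : lexpr N) : R :=
  match e with
  | LVar i => s i
  | LAnd a b => leval s a * leval s b
  | LOr a b => leval s a + leval s b
  end.

(* rn_edge i j = Some true : activation i -> j;  Some false : repression i -| j;
   None : no edge (i,j).  At most one edge per ordered pair is built in. *)
Record network (N : nat) := Network {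
  rn_edge : 'I_N -> 'I_N -> option bool;
  rn_logic : 'I_N -> lexpr N }.

Definition srcs N (rn : network N) (n : 'I_N) : {set 'I_N} :=
  [set i | rn_edge rn i n != None].
Definition tgts N (rn : network N) (n : 'I_N) : {set 'I_N} :=
  [set j | rn_edge rn n j != None].

Definition network_ok N (rn : network N) : Prop :=
  (forall i, rn_edge rn i i != Some false) /\
  (forall j, perm_eq (lvars (rn_logic rn j)) (enum (srcs rn j))).

(* parameter z = (l,u,theta,gamma); pl j i = l_{j,i} etc. for edge (i,j) *)
Record param (R : realFieldType) (N : nat) := Param {
  pl : 'I_N -> 'I_N -> R;
  pu : 'I_N -> 'I_N -> R;
  pth : 'I_N -> 'I_N -> R;
  pgam : 'I_N -> R }.

(* a cell: for each i the pair (a_i, b_i); None encodes -oo (resp. +oo) *)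
Definition cell N := {ffun 'I_N -> option 'I_N * option 'I_N}.
(* a face: (projection index k, switching index s, the other factors;
   the k-th factor of the last component is normalised to (None,None)) *)
Definition face N := ('I_N * 'I_N * cell N)%type.
Definition vtx N := (cell N + face N)%type.

Section Dynamics.
Variables (R : realFieldType) (N : nat) (rn : network N) (z : param R N).

Definition below (x : R) (h : option R) : bool :=
  if h is Some y then x < y else true.

(* theta_{a_i,i} (with theta_{-oo,i} = 0) and theta_{b_i,i} (None = oo) *)
Definition lo (c : cell N) i : R :=
  if (c i).1 is Some j then pth z j i else 0.
Definition hi (c : cell N) i : option R :=
  if (c i).2 is Some j then Some (pth z j i) else None.

(* c is a fundamental cell: thresholds of i's factor are thresholds of i
   and are consecutive *)
Definition cell_ok (c : cell N) : bool :=
  [forall i, [&& (if (c i).1 is Some j then j \in tgts rn i else true),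
                 (if (c i).2 is Some j then j \in tgts rn i else true),
                 below (lo c i) (hi c i) &
                 [forall j in tgts rn i,
                     ~~ ((lo c i < pth z j i) && below (pth z j i) (hi c i))]]].

(* switching nonlinearity sigma_{j,i}(x); its value when x_i = theta_{j,i}
   is unspecified in the paper and never used below *)
Definition sigma (j i : 'I_N) (x : 'I_N -> R) : R :=
  match rn_edge rn i j with
  | Some true => if x i < pth z j i then pl z j i
                 else if pth z j i < x i then pu z j i else 0
  | Some false => if pth z j i < x i then pl z j i
                  else if x i < pth z j i then pu z j i else 0
  | None => 0
  end.

Definition Lam (j : 'I_N) (x : 'I_N -> R) : R :=
  leval (fun i => sigma j i x) (rn_logic rn j).

Definition rep (c : cell N) : 'I_N -> R :=
  fun i => if hi c i is Some h then (lo c i + h) / 2 else lo c i + 1.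

(* Lambda(kappa): the (constant) value of Lambda on kappa *)
Definition LamC (c : cell N) (j : 'I_N) : R := Lam j (rep c).

Definition collapse (c : cell N) (k : 'I_N) : cell N :=
  [ffun i => if i == k then (None, None) else c i].

Definition is_left (t : face N) (c : cell N) : bool :=
  let: (k, s, f) := t in [&& cell_ok c, (c k).1 == Some s & f == collapse c k].
Definition is_right (t : face N) (c : cell N) : bool :=
  let: (k, s, f) := t in [&& cell_ok c, (c k).2 == Some s & f == collapse c k].
Definition is_face (t : face N) (c : cell N) : bool := is_left t c || is_right t c.

Definition ell (t : face N) (c : cell N) : R :=
  let: (k, s, _) := t in
  (if is_left t c then 1 else -1) * Num.sg (- (pgam z k * pth z s k) + LamC c k).

Definition entrance (t : face N) (c : cell N) : bool := is_face t c && (ell t c == 1).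
Definition absorbing (t : face N) (c : cell N) : bool := is_face t c && (ell t c == -1).

Definition attracting (c : cell N) : bool :=
  cell_ok c && [forall i, (lo c i < LamC c i / pgam z i) &&
                           below (LamC c i / pgam z i) (hi c i)].

Definition regular : Prop :=
  [/\ (forall i j, rn_edge rn i j != None ->
          [/\ 0 < pl z j i, pl z j i < pu z j i & 0 < pth z j i]),
      (forall i, 0 < pgam z i),
      (forall i j j', j \in tgts rn i -> j' \in tgts rn i ->
          pth z j i = pth z j' i -> j = j') &
      (forall (c : cell N) i j, cell_ok c ->
          ((c i).1 == Some j) || ((c i).2 == Some j) ->
          LamC c i != pgam z i * pth z j i)].

(* Wall graph.  Vertices: attracting cells and all faces (other cells are
   isolated, carry no edges). *)
Definition wall_graph : rel (vtx N) := fun x y =>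
  match x, y with
  | inr t, inr t' => [exists c, entrance t c && absorbing t' c]
  | inl c, inl c' => (c == c') && attracting c
  | inr t, inl c => attracting c && is_face t c
  | inl _, inr _ => false
  end.

Definition domain_graph : rel (vtx N) := fun x y =>
  match x, y with
  | inl c, inl c' => ((c == c') && attracting c) ||
                     [exists t, absorbing t c && entrance t c']
  | _, _ => false
  end.

Definition wall_domain_graph : rel (vtx N) := fun x y =>
  match x, y with
  | inl c, inr t => absorbing t c
  | inr t, inl c => entrance t c
  | inl c, inl c' => (c == c') && attracting c
  | inr _, inr _ => false
  end.

End Dynamics.

Section Morse.
Variables (T : finType) (e : rel T).

Definition restrict (C : {set T}) : rel T :=
  fun x y => [&& x \in C, y \in C & e x y].

Definition recurrent_set (C : {set T}) : bool :=
  [forall u in C, forall v in C,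
     exists w, restrict C u w && connect (restrict C) w v].

Definition morse_set (C : {set T}) : bool :=
  maxset (fun D : {set T} => (D != set0) && recurrent_set D) C.

(* morse_le q p  <=>  q <= p  <=>  path in the graph from an element of p to
   an element of q *)
Definition morse_le (q p : {set T}) : bool :=
  [exists x in p, exists y in q, connect e x y].

Definition hasse (p q : {set T}) : bool :=
  [&& morse_set p, morse_set q, p != q, morse_le q p &
      ~~ [exists r, [&& morse_set r, r != p, r != q, morse_le q r & morse_le r p]]].

End Morse.

Definition morse_iso (T : finType) (e1 e2 : rel T) : Prop :=
  exists f : {set T} -> {set T},
    [/\ forall p, morse_set e1 p -> morse_set e2 (f p),
        forall p q, morse_set e1 p -> morse_set e1 q -> f p = f q -> p = q,
        forall q, morse_set e2 q -> exists2 p, morse_set e1 p & f p = q &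
        forall p q, morse_set e1 p -> morse_set e1 q ->
          hasse e1 p q = hasse e2 (f p) (f q)].

(** Morse sets of a finite graph are the strongly connected components of its
    recurrent vertices, ordered by reachability, so two graphs have isomorphic
    Morse graphs as soon as they have the same recurrent components with the
    same reachability between them.  The wall-domain graph only has edges
    between cells and faces; a cell path [t -> c -> t'] through an entrance
    wall [(t, c)] and an absorbing wall [(t', c)] is a wall-graph edge [t -> t'],
    a face path [c -> t -> c'] is a domain-graph edge [c -> c'], and at an
    attracting cell every wall is an entrance, so both the wall graph and the
    domain graph are shortcuts of the wall-domain graph with the same
    recurrent components and the same reachability among them. *)

From HB Require Import structures.
From mathcomp Require Import all_boot all_order all_algebra.
Set Implicit Arguments. Unset Strict Implicit. Unset Printing Implicit Defensive.
Import Order.TTheory GRing.Theory Num.Theory.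

Section Reachability.
Variables (T : finType) (e : rel T).

Definition tconnect x y := [exists w, e x w && connect e w y].
Definition recurrent x := tconnect x x.
Definition scc x : {set T} := [set y | connect e x y && connect e y x].

Lemma tconnectP x y : reflect (exists2 w, e x w & connect e w y) (tconnect x y).
Proof.
by apply: (iffP existsP) => [[w /andP[]]|[w exw cwy]]; exists w => //; apply/andP.
Qed.

Lemma tconnect_connect x y : tconnect x y -> connect e x y.
Proof. by case/tconnectP=> w /connect1; apply: connect_trans. Qed.

Lemma tconnect_connect_trans x y y' : tconnect x y -> connect e y y' -> tconnect x y'.
Proof.
by case/tconnectP=> w exw cwy cyy'; apply/tconnectP; exists w; last exact: connect_trans cyy'.
Qed.

Lemma connect_tconnect_trans x y y' : connect e x y -> tconnect y y' -> tconnect x y'.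
Proof.
case/connectP=> [[|w p] /=]; first by move=> _ ->.
case/andP=> exw pw -> /tconnect_connect cy; apply/tconnectP; exists w => //.
by apply: connect_trans cy; apply/connectP; exists p.
Qed.

Lemma scc_refl x : x \in scc x.
Proof. by rewrite inE connect0. Qed.

Lemma eq_sccP x y : reflect (scc x = scc y) (y \in scc x).
Proof.
apply: (iffP idP) => [|->]; last exact: scc_refl.
rewrite inE => /andP[cxy cyx]; apply/setP=> u; rewrite !inE.
apply/andP/andP=> [][cu uc]; split.
- exact: connect_trans cyx cu.
- exact: connect_trans uc cxy.
- exact: connect_trans cxy cu.
- exact: connect_trans uc cyx.
Qed.

Lemma recurrent_scc x y : recurrent x -> y \in scc x -> recurrent y.
Proof.
rewrite inE => rx /andP[cxy cyx].
exact: connect_tconnect_trans cyx (tconnect_connect_trans rx cxy).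
Qed.

Lemma connect_restrict_scc x a b : a \in scc x -> b \in scc x ->
  connect e a b -> connect (restrict e (scc x)) a b.
Proof.
move=> ha hb /connectP[p]; elim: p a ha => [|w p IH] a ha /=; first by move=> _ ->.
case/andP=> eaw pw lastb.
have hw : w \in scc x.
  move: ha hb; rewrite !inE lastb => /andP[cxa _] /andP[_ cbx].
  rewrite (connect_trans cxa (connect1 eaw)); apply: connect_trans cbx.
  by apply/connectP; exists p.
by apply: connect_trans (IH w hw pw lastb); apply: connect1; rewrite /restrict ha hw.
Qed.

Lemma recurrent_set_tconnect C a b : recurrent_set e C -> a \in C -> b \in C ->
  tconnect a b.
Proof.
move=> recC ha hb.
move/forallP: recC => /(_ a) /implyP /(_ ha) /forallP /(_ b) /implyP /(_ hb).
case/existsP=> w /andP[/and3P[_ _ eaw] cwb]; apply/tconnectP; exists w => //.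
by apply: connect_sub cwb => u v /and3P[_ _ euv]; apply: connect1.
Qed.

Lemma recurrent_set_sub_scc C x : recurrent_set e C -> x \in C -> C \subset scc x.
Proof.
move=> recC Cx; apply/subsetP=> y Cy; rewrite inE.
by rewrite !tconnect_connect ?(recurrent_set_tconnect recC).
Qed.

Lemma recurrent_set_scc x : recurrent x -> recurrent_set e (scc x).
Proof.
move=> rx; apply/forallP=> u; apply/implyP=> hu; apply/forallP=> v; apply/implyP=> hv.
have /tconnectP[w euw cwu] := recurrent_scc rx hu.
have hw : w \in scc x.
  move: hu; rewrite !inE => /andP[cxu cux].
  by rewrite (connect_trans cxu (connect1 euw)) (connect_trans cwu cux).
apply/existsP; exists w; rewrite /restrict hu hw euw; apply: connect_restrict_scc => //.
move: hu hv; rewrite !inE => /andP[_ cux] /andP[cxv _].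
exact: connect_trans cwu (connect_trans cux cxv).
Qed.

Lemma morse_set_scc x : recurrent x -> morse_set e (scc x).
Proof.
move=> rx; apply/maxsetP; split.
  by rewrite recurrent_set_scc // andbT; apply/set0Pn; exists x; apply: scc_refl.
move=> B /andP[_ recB] sub; apply/eqP; rewrite eqEsubset sub andbT.
by apply: recurrent_set_sub_scc recB _; apply: (subsetP sub); apply: scc_refl.
Qed.

Lemma morse_set_mem C x : morse_set e C -> x \in C -> recurrent x /\ C = scc x.
Proof.
case/maxsetP=> /andP[_ recC] maxC Cx.
have rx : recurrent x by apply: (recurrent_set_tconnect recC).
split=> //; apply/esym/maxC; last exact: recurrent_set_sub_scc recC Cx.
by have /maxsetP[] := morse_set_scc rx.
Qed.

Lemma morse_set_nonempty C : morse_set e C -> exists x, x \in C.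
Proof. by case/maxsetP=> /andP[/set0Pn[x Cx] _] _; exists x. Qed.

Lemma morse_setP C : morse_set e C <-> exists2 x, recurrent x & C = scc x.
Proof.
split=> [mC|[x rx ->]]; last exact: morse_set_scc.
have [x Cx] := morse_set_nonempty mC; have [rx ->] := morse_set_mem mC Cx.
by exists x.
Qed.

Lemma morse_le_scc x y : morse_le e (scc y) (scc x) = connect e x y.
Proof.
apply/existsP/idP=> [[a /andP[+ /existsP[b /andP[+ cab]]]]|cxy].
  rewrite !inE => /andP[cxa _] /andP[_ cby].
  exact: connect_trans cxa (connect_trans cab cby).
by exists x; rewrite scc_refl /=; apply/existsP; exists y; rewrite scc_refl.
Qed.

End Reachability.

Section MorseIsomorphism.
Variable T : finType.

Lemma morse_iso_of_order_bij (e1 e2 : rel T) (f : {set T} -> {set T}) :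
  (forall p, morse_set e1 p -> morse_set e2 (f p)) ->
  (forall p q, morse_set e1 p -> morse_set e1 q -> f p = f q -> p = q) ->
  (forall q, morse_set e2 q -> exists2 p, morse_set e1 p & f p = q) ->
  (forall p q, morse_set e1 p -> morse_set e1 q ->
     morse_le e1 q p = morse_le e2 (f q) (f p)) ->
  morse_iso e1 e2.
Proof.
move=> mf inj_f surj_f le_f; exists f; split=> // p q mp mq.
have neq_f r r' : morse_set e1 r -> morse_set e1 r' -> (r != r') = (f r != f r').
  move=> mr mr'; apply/idP/idP; apply: contra => /eqP E; apply/eqP.
    exact: inj_f.
  by rewrite E.
rewrite /hasse mp mq (mf p mp) (mf q mq) (le_f p q mp mq) (neq_f p q mp mq) /=.
congr (_ && (_ && ~~ _)); apply/existsP/existsP.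
  case=> r /and5P[mr rp rq lqr lrp]; exists (f r).
  by rewrite (mf r mr) -(neq_f r p) // -(neq_f r q) // -(le_f r q) // -(le_f p r) // rp rq lqr lrp.
case=> r' /and5P[mr' rp rq lqr lrp]; have [r mr fr] := surj_f r' mr'.
rewrite -fr in rp rq lqr lrp; exists r.
by rewrite mr (neq_f r p) // (neq_f r q) // (le_f r q) // (le_f p r) // rp rq lqr lrp.
Qed.

Lemma morse_iso_sym (e1 e2 : rel T) : morse_iso e1 e2 -> morse_iso e2 e1.
Proof.
case=> f [mf inj_f surj_f hasse_f].
pose g q := odflt q [pick p | morse_set e1 p && (f p == q)].
have gK q : morse_set e2 q -> morse_set e1 (g q) /\ f (g q) = q.
  move=> mq; rewrite /g; case: pickP => [p /andP[mp /eqP]|none] //=.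
  by have [p mp fp] := surj_f q mq; move: (none p); rewrite mp fp eqxx.
exists g; split.
- by move=> q /gK[].
- by move=> p q /gK[_ fp] /gK[_ fq] gpq; rewrite -fp -fq gpq.
- move=> p mp; exists (f p); first exact: mf.
  by have [mg fg] := gK _ (mf p mp); apply: inj_f.
- by move=> p q /gK[mp fp] /gK[mq fq]; rewrite hasse_f // fp fq.
Qed.

Lemma morse_iso_trans (e1 e2 e3 : rel T) :
  morse_iso e1 e2 -> morse_iso e2 e3 -> morse_iso e1 e3.
Proof.
case=> f [mf inj_f surj_f hasse_f] [g [mg inj_g surj_g hasse_g]].
exists (g \o f); split=> /=.
- by move=> p mp; apply/mg/mf.
- by move=> p q mp mq /(inj_g _ _ (mf p mp) (mf q mq)); apply: inj_f.
- move=> q mq; have [r mr <-] := surj_g q mq.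
  by have [p mp <-] := surj_f r mr; exists p.
- by move=> p q mp mq; rewrite hasse_f // hasse_g ?mf.
Qed.

Lemma morse_iso_of_recurrent (e1 e2 : rel T) :
  (forall x, recurrent e1 x -> recurrent e2 x) ->
  (forall y, recurrent e2 y -> exists2 x, recurrent e1 x & x \in scc e2 y) ->
  (forall x y, recurrent e1 x -> recurrent e1 y -> connect e1 x y = connect e2 x y) ->
  morse_iso e1 e2.
Proof.
move=> rec12 rec21 connect12.
pose f (C : {set T}) := if [pick x in C] is Some x then scc e2 x else set0.
have fP C : morse_set e1 C ->
    exists x, [/\ recurrent e1 x, C = scc e1 x & f C = scc e2 x].
  rewrite /f => mC; case: pickP => [x Cx|none].
    by have [rx ->] := morse_set_mem mC Cx; exists x.
  by have [x Cx] := morse_set_nonempty mC; move: (none x); rewrite Cx.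
have scc_connect12 x y : recurrent e1 x -> recurrent e1 y ->
    (y \in scc e1 x) = (y \in scc e2 x).
  by move=> rx ry; rewrite !inE !connect12.
apply: (morse_iso_of_order_bij (f := f)).
- by move=> p /fP[x [rx _ ->]]; apply/morse_set_scc/rec12.
- move=> p q /fP[x [rx -> ->]] /fP[y [ry -> ->]] /eq_sccP.
  by rewrite -scc_connect12 // => /eq_sccP.
- move=> q /morse_setP[y ry ->]; have [x rx /eq_sccP ->] := rec21 y ry.
  exists (scc e1 x); first exact: morse_set_scc.
  have [x' [rx' E ->]] := fP _ (morse_set_scc rx).
  have : x \in scc e1 x' by rewrite -E scc_refl.
  by rewrite scc_connect12 // => /eq_sccP.
- by move=> p q /fP[x [rx -> ->]] /fP[y [ry -> ->]]; rewrite !morse_le_scc connect12.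
Qed.

End MorseIsomorphism.

Section Shortcut.
Variables (T : finType) (e f : rel T) (K : pred T).
Hypothesis f_tconnect : forall x y, f x y -> [&& K x, K y & tconnect e x y].
Hypothesis e_f : forall x y, K x -> K y -> e x y -> f x y.
Hypothesis e2_f : forall x y y', K x -> ~~ K y -> e x y -> e y y' -> f x y'.
Hypothesis e_notin : forall x y, ~~ K x -> e x y -> K y.

(* The second component lets the induction step over a vertex outside [K]. *)
Lemma shortcut_path p x : path e x p -> K (last x p) ->
  (K x -> connect f x (last x p)) /\
  (forall w, K w -> e w x -> tconnect f w (last x p)).
Proof.
elim: p x => [|y p IH] x /=.
  move=> _ Kx; split=> [_|w Kw ewx]; first exact: connect0.
  by apply/tconnectP; exists x; [apply: e_f | apply: connect0].
case/andP=> exy /IH{}IH /IH[connect_y tconnect_y].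
have connect_x : K x -> connect f x (last y p).
  move=> Kx; case Ky: (K y); last exact/tconnect_connect/tconnect_y.
  exact: connect_trans (connect1 (e_f Kx Ky exy)) (connect_y Ky).
split=> // w Kw ewx; case Kx: (K x).
  by apply/tconnectP; exists x; [apply: e_f | apply: connect_x].
have Ky := e_notin (negbT Kx) exy.
by apply/tconnectP; exists y; [apply: e2_f (negbT Kx) ewx exy | apply: connect_y].
Qed.

Lemma shortcut_connect x y : K x -> K y -> connect e x y -> connect f x y.
Proof.
by move=> Kx Ky /connectP[p px lastp]; subst y; apply: (shortcut_path px Ky).1.
Qed.

Lemma shortcut_tconnect x y : K x -> K y -> tconnect e x y -> tconnect f x y.
Proof.
move=> Kx Ky /tconnectP[w exw /connectP[p pw lastp]]; subst y.
exact: (shortcut_path pw Ky).2 x Kx exw.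
Qed.

Lemma connect_shortcut x y : connect f x y -> connect e x y.
Proof.
by apply: connect_sub => u v /f_tconnect/and3P[_ _]; apply: tconnect_connect.
Qed.

Lemma tconnect_shortcut x y : tconnect f x y -> tconnect e x y.
Proof.
case/tconnectP=> w /f_tconnect/and3P[_ _ exw] /connect_shortcut.
exact: tconnect_connect_trans.
Qed.

Lemma recurrent_shortcut x : recurrent f x -> K x.
Proof. by case/tconnectP=> w /f_tconnect/andP[]. Qed.

Lemma morse_iso_shortcut : morse_iso f e.
Proof.
apply: morse_iso_of_recurrent.
- by move=> x; apply: tconnect_shortcut.
- move=> y ry; case Ky: (K y).
    by exists y; [apply: shortcut_tconnect | apply: scc_refl].
  have /tconnectP[w eyw cwy] := ry.
  have Kw := e_notin (negbT Ky) eyw.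
  have yw : w \in scc e y by rewrite inE connect1.
  by exists w; first exact/shortcut_tconnect/(recurrent_scc ry yw).
- move=> x y /recurrent_shortcut Kx /recurrent_shortcut Ky.
  by apply/idP/idP; [apply: connect_shortcut | apply: shortcut_connect].
Qed.

End Shortcut.

Local Open Scope ring_scope.

Section WallLabeling.
Variables (R : realFieldType) (N : nat) (rn : network N) (z : param R N).
Hypothesis reg : regular rn z.

(* As [Gamma^-1 Lambda(c)] lies in [c], [Lambda_k(c) - gamma_k theta] is positive
   at a left face and negative at a right face. *)
Lemma attracting_ell t c : attracting rn z c -> is_face rn z t c -> ell rn z t c = 1.
Proof.
case: reg => _ gam_gt0 _ _ /andP[_ /forallP inside].
case: t => [[k s] f] face_tc /=; have /andP[lo_lt lt_hi] := inside k.
case left_tc: [&& cell_ok rn z c, (c k).1 == Some s & f == collapse c k].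
  move: left_tc lo_lt => /and3P[_ /eqP ck _]; rewrite /lo ck ltr_pdivlMr //.
  by move=> lt_lam; rewrite mul1r gtr0_sg // addrC subr_gt0 mulrC.
move: face_tc lt_hi; rewrite /is_face /= left_tc /= => /and3P[_ /eqP ck _].
rewrite /hi ck /= ltr_pdivrMr // => lam_lt.
by rewrite ltr0_sg ?mulrNN ?mulr1 // addrC subr_lt0 mulrC.
Qed.

Lemma attracting_entrance t c :
  attracting rn z c -> is_face rn z t c -> entrance rn z t c.
Proof. by move=> ac ftc; rewrite /entrance ftc (attracting_ell ac ftc) eqxx. Qed.

Lemma attracting_absorbingF t c : attracting rn z c -> absorbing rn z t c = false.
Proof.
move=> ac; rewrite /absorbing; case ftc: (is_face rn z t c) => //=.
by rewrite (attracting_ell ac ftc) -subr_eq0 opprK (@pnatr_eq0 R 2).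
Qed.

End WallLabeling.

Section GraphShortcuts.
Variables (R : realFieldType) (N : nat) (rn : network N) (z : param R N).

Lemma morse_iso_wall_domain_graph : regular rn z ->
  morse_iso (wall_graph rn z) (wall_domain_graph rn z).
Proof.
move=> reg.
apply: (morse_iso_shortcut (K := fun v : vtx N =>
          if v is inl c then attracting rn z c else true)).
- move=> [c|t] [c'|t'] //=.
  + case/andP=> /eqP <- ac; rewrite ac; apply/tconnectP; exists (inl c) => //=.
    by rewrite eqxx.
  + case/andP=> ac ftc; rewrite ac; apply/tconnectP; exists (inl c') => //=.
    exact: attracting_entrance.
  + by case/existsP=> c /andP[en ab]; apply/tconnectP; exists (inl c); last exact: connect1.
- move=> [c|t] [c'|t'] //= Kx Ky; first by rewrite (attracting_absorbingF reg _ Kx).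
  by case/andP=> ftc _; rewrite Ky.
- move=> [c|t] [c'|t'] [c''|t''] //= Kx nKy.
  + by case/andP=> /eqP E ac; rewrite -E ac in nKy.
  + by case/andP=> /eqP E ac; rewrite -E ac in nKy.
  + by move=> _ /andP[_ ac]; rewrite ac in nKy.
  + by move=> en ab; apply/existsP; exists c'; rewrite en.
- by move=> [c|t] [c'|t'] //= nK /andP[_ ac]; rewrite ac in nK.
Qed.

Lemma morse_iso_domain_graph :
  morse_iso (domain_graph rn z) (wall_domain_graph rn z).
Proof.
apply: (morse_iso_shortcut (K := fun v : vtx N => if v is inl _ then true else false)).
- move=> [c|t] [c'|t'] //= /orP[/andP[/eqP <- ac]|/existsP[t /andP[ab en]]].
    by apply/tconnectP; exists (inl c) => //=; rewrite eqxx.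
  by apply/tconnectP; exists (inr t); last exact: connect1.
- by move=> [c|t] [c'|t'] //= _ _ ->.
- move=> [c|t] [c'|t'] // [c''|t''] //= _ _ ab en.
  by apply/orP; right; apply/existsP; exists t'; rewrite ab.
- by move=> [c|t] [c'|t'].
Qed.

End GraphShortcuts.

Theorem proposition3p15 (R : realFieldType) (N : nat) (rn : network N)
  (z : param R N) :
  network_ok rn -> regular rn z ->
  [/\ morse_iso (wall_graph rn z) (wall_domain_graph rn z),
      morse_iso (wall_domain_graph rn z) (domain_graph rn z) &
      morse_iso (wall_graph rn z) (domain_graph rn z)].
Proof.
move=> _ reg.
have W_WD := morse_iso_wall_domain_graph reg.
have WD_D := morse_iso_sym (morse_iso_domain_graph rn z).
by split; [| | apply: morse_iso_trans W_WD WD_D].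
Qed.
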